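(* Let $\mathcal{H}$ be a complex Hilbert space, let $A\in\mathcal{B}(\mathcal{H})$ be a nonzero positive operator, and let $\mathbb{A}=\begin{pmatrix}A&O\\O&A\end{pmatrix}$ on $\mathcal{H}\oplus\mathcal{H}$. Let $P,Q\in\mathcal{B}_A(\mathcal{H})$. Then $$\omega_{\mathbb{A}}\left[\begin{pmatrix}P&Q\\O&O\end{pmatrix}\right]\geq\frac12\max\{\omega_A(P+iQ),\omega_A(P-iQ)\}.$$
   Context: For a positive operator $A$ on $\mathcal{H}$, $\langle x,y\rangle_A:=\langle Ax,y\rangle$ and $\|x\|_A:=\sqrt{\langle x,x\rangle_A}$. $\mathcal{B}_A(\mathcal{H})$ is the set of $T\in\mathcal{B}(\mathcal{H})$ with $\mathcal{R}(T^*A)\subseteq\mathcal{R}(A)$. $\omega_A(T):=\sup\{|\langle Tx,x\rangle_A|:x\in\mathcal{H},\|x\|_A=1\}$. $\omega_{\mathbb{A}}$ is defined analogously on $\mathcal{H}\oplus\mathcal{H}$ with $\langle (x_1,x_2),(y_1,y_2)\rangle_{\mathbb{A}}=\langle x_1,y_1\rangle_A+\langle x_2,y_2\rangle_A$. *)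

From mathcomp Require Import all_boot all_order all_algebra.
From mathcomp Require Import all_classical all_reals ereal.
From mathcomp.real_closed Require Export complex.
Export Order.TTheory GRing.Theory Num.Theory.

Set Implicit Arguments.
Unset Strict Implicit.
Unset Printing Implicit Defensive.

Local Open Scope ring_scope.
Local Open Scope classical_set_scope.
Local Open Scope ereal_scope.
Local Open Scope ring_scope.

Section HilbertDefs.
Variable R : realType.
Local Notation C := R[i].

Definition ipnorm (W : Type) (ip : W -> W -> C) (x : W) : R :=
  Num.sqrt (complex.Re (ip x x)).

Variable V : lmodType C.
Variable ip : V -> V -> C.

Definition is_hilbert : Prop :=
  [/\ (forall (a : C) (x y z : V), ip (a *: x + y) z = a * ip x z + ip y z),
      (forall x y : V, ip y x = (ip x y)^*),
      (forall x : V, 0 <= ip x x),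
      (forall x : V, ip x x = 0 -> x = 0) &
      (forall u : nat -> V,
          (forall eps : R, 0 < eps -> exists N : nat, forall m n : nat,
              (N <= m)%N -> (N <= n)%N -> ipnorm ip (u m - u n) < eps) ->
          exists l : V, forall eps : R, 0 < eps -> exists N : nat,
              forall n : nat, (N <= n)%N -> ipnorm ip (u n - l) < eps)].

Definition is_bounded_op (T : V -> V) : Prop :=
  linear T /\ exists M : R, forall x, ipnorm ip (T x) <= M * ipnorm ip x.

Definition is_adjoint (T S : V -> V) : Prop :=
  forall x y, ip (T x) y = ip x (S y).

Definition is_positive_op (A : V -> V) : Prop :=
  is_bounded_op A /\ forall x, 0 <= ip (A x) x.

(* T \in B_A(H): T in B(H) and R(T^* A) \subseteq R(A). *)
Definition in_BA (A T : V -> V) : Prop :=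
  is_bounded_op T /\
  exists S : V -> V, [/\ is_bounded_op S, is_adjoint T S &
                         forall x, exists y, S (A x) = A y].

End HilbertDefs.

Definition sradius (R : realType) (W : Type) (sip : W -> W -> R[i]) (T : W -> W)
  : \bar R :=
  ereal_sup [set ((complex.Re `|sip (T x) x|)%:E) | x in [set x | ipnorm sip x = 1]].

Definition ipA (R : realType) (V : lmodType R[i]) (ip : V -> V -> R[i])
  (A : V -> V) : V -> V -> R[i] := fun x y => ip (A x) y.

Definition omegaA (R : realType) (V : lmodType R[i]) (ip : V -> V -> R[i])
  (A T : V -> V) : \bar R := sradius (ipA ip A) T.

Definition ipAA (R : realType) (V : lmodType R[i]) (ip : V -> V -> R[i])
  (A : V -> V) : V * V -> V * V -> R[i] :=
  fun u v => ipA ip A u.1 v.1 + ipA ip A u.2 v.2.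

Definition omegaAA (R : realType) (V : lmodType R[i]) (ip : V -> V -> R[i])
  (A : V -> V) (T : V * V -> V * V) : \bar R := sradius (ipAA ip A) T.

Definition blk_PQ00 (R : realType) (V : lmodType R[i]) (P Q : V -> V)
  : V * V -> V * V := fun u => (P u.1 + Q u.2, 0).

From mathcomp Require Import all_boot all_order all_algebra.
From mathcomp Require Import all_classical all_reals ereal.
From mathcomp.real_closed Require Import complex.
From mathcomp Require Import ring.
Import Order.TTheory GRing.Theory Num.Theory.
Local Open Scope ring_scope.

(** For [|c| = 1] and an [A]-unit vector [x], the vector [u = (x, c x)/√2]
    is an [𝔸]-unit vector and [<T u, u>_𝔸 = <(P + c Q) x, x>_A / 2], where
    [T] is the block operator; hence [ω_𝔸(T) >= ω_A(P + c Q) / 2], and the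
    theorem is the cases [c = i] and [c = -i]. *)

Section Sesquilinear.
Context {R : realType} {V : lmodType R[i]} {ip : V -> V -> R[i]}.
Hypothesis ip_linearl :
  forall (a : R[i]) (x y z : V), ip (a *: x + y) z = a * ip x z + ip y z.
Hypothesis ip_hermitian : forall x y : V, ip y x = (ip x y)^*.

Lemma ip0l z : ip 0 z = 0.
Proof.
have := ip_linearl 1 0 0 z; rewrite scale1r addr0 mul1r => h.
by apply: (addrI (ip 0 z)); rewrite addr0 -h.
Qed.

Lemma ipZl a x z : ip (a *: x) z = a * ip x z.
Proof. by rewrite -[a *: x]addr0 ip_linearl ip0l addr0. Qed.

Lemma ipDl x y z : ip (x + y) z = ip x z + ip y z.
Proof. by rewrite -[x]scale1r ip_linearl mul1r scale1r. Qed.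

Lemma ipZr a x z : ip z (a *: x) = a^* * ip z x.
Proof. by rewrite ip_hermitian ipZl rmorphM /= -ip_hermitian. Qed.

End Sesquilinear.

Section LinearFun.
Context {R : realType} {V : lmodType R[i]} {f : V -> V}.
Hypothesis f_linear : linear f.

Lemma lin0 : f 0 = 0.
Proof.
have := f_linear 1 0 0; rewrite !scale1r addr0 => h.
by apply: (addrI (f 0)); rewrite addr0 -h.
Qed.

Lemma linZ a x : f (a *: x) = a *: f x.
Proof. by rewrite -[a *: x]addr0 f_linear lin0 addr0. Qed.

Lemma linD x y : f (x + y) = f x + f y.
Proof. by rewrite -[x]scale1r f_linear !scale1r. Qed.

End LinearFun.

Lemma Re_normM_ge0 (R : realType) (r : R) (w : R[i]) :
  0 <= r -> complex.Re `|r%:C%C * w| = r * complex.Re `|w|.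
Proof. by move=> r_ge0; rewrite normrM ger0_norm ?ler0c //; case: `|w| => p q; simpc. Qed.

Lemma le_sradius (R : realType) (W : Type) (sip : W -> W -> R[i]) (T : W -> W) u :
  ipnorm sip u = 1 -> ((complex.Re `|sip (T u) u|)%:E <= sradius sip T)%E.
Proof. by move=> u1; apply: ereal_sup_ubound; exists u. Qed.

Section BlockOperator.
Context {R : realType} {V : lmodType R[i]} {ip : V -> V -> R[i]}.
Hypothesis ip_linearl :
  forall (a : R[i]) (x y z : V), ip (a *: x + y) z = a * ip x z + ip y z.
Hypothesis ip_hermitian : forall x y : V, ip y x = (ip x y)^*.
Context {A P Q : V -> V}.
Hypotheses (A_linear : linear A) (P_linear : linear P) (Q_linear : linear Q).

Lemma ipAA_scale_pair a b x :
  ipAA ip A (a *: x, b *: x) (a *: x, b *: x)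
  = (`|a| ^+ 2 + `|b| ^+ 2) * ipA ip A x x.
Proof.
rewrite /ipAA /ipA /= !(linZ A_linear) !(ipZl ip_linearl).
by rewrite !(ipZr ip_linearl ip_hermitian) !normCK; ring.
Qed.

Lemma ipAA_blk_PQ00_scale_pair a c x :
  ipAA ip A (blk_PQ00 P Q (a *: x, (c * a) *: x)) (a *: x, (c * a) *: x)
  = `|a| ^+ 2 * ipA ip A (P x + c *: Q x) x.
Proof.
rewrite /ipAA /ipA /blk_PQ00 /= (lin0 A_linear) (ip0l ip_linearl) addr0.
rewrite (linZ P_linear) (linZ Q_linear) !(linD A_linear) !(linZ A_linear).
rewrite !(ipDl ip_linearl) !(ipZl ip_linearl) !(ipZr ip_linearl ip_hermitian).
by rewrite normCK; ring.
Qed.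

Lemma omegaA_le_omegaAA c : `|c| = 1 ->
  ((2^-1)%:E * omegaA ip A (fun x => (P x + c *: Q x)%R)
     <= omegaAA ip A (blk_PQ00 P Q))%E.
Proof.
move=> c1; pose a : R[i] := (Num.sqrt (2^-1 : R))%:C%C.
have a2 : `|a| ^+ 2 = (2^-1 : R)%:C%C.
  by rewrite ger0_norm ?ler0c ?sqrtr_ge0 // -rmorphXn /= sqr_sqrtr ?invr_ge0.
rewrite /omegaA /sradius -ereal_sup_pZl //.
apply: ge_ereal_sup => _ [_ [x /= x1 <-] <-].
rewrite -EFinM -Re_normM_ge0 // -a2 -ipAA_blk_PQ00_scale_pair.
apply: le_sradius; rewrite /ipnorm ipAA_scale_pair normrM c1 mul1r a2.
have half_add : 2^-1 + 2^-1 = 1 :> R by rewrite [RHS](splitr 1) mul1r.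
by rewrite -rmorphD /= half_add rmorph1 mul1r.
Qed.

End BlockOperator.

Theorem theorem2p19 (R : realType) (V : lmodType R[i]) (ip : V -> V -> R[i])
  (A P Q : V -> V) :
  is_hilbert ip ->
  is_positive_op ip A ->
  (exists x, A x != 0) ->
  in_BA ip A P -> in_BA ip A Q ->
  ((2^-1)%:E * Order.max (omegaA ip A (fun x => (P x + 'i%C *: Q x)%R))
                         (omegaA ip A (fun x => (P x - 'i%C *: Q x)%R))
     <= omegaAA ip A (blk_PQ00 P Q))%E.
Proof.
move=> [ip_lin ip_herm _ _ _] [[A_lin _] _] _ [[P_lin _] _] [[Q_lin _] _].
have le_omegaAA := omegaA_le_omegaAA ip_lin ip_herm A_lin P_lin Q_lin.
have -> : (fun x => P x - 'i%C *: Q x) = (fun x => P x + (- 'i%C) *: Q x).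
  by apply: funext => x; rewrite scaleNr.
rewrite maxe_pMr // ge_max le_omegaAA ?normCi // le_omegaAA //.
by rewrite normrN normCi.
Qed.
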